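(* Fix a Bergman tree $\mathcal{T}_n$ with parameter $\lambda>0$. There is a constant $C>0$ (depending only on $n$ and $\lambda$) such that for every $M>0$ and all $\alpha,\alpha'\in\mathcal{T}_n$ with $d(\alpha)=d(\alpha')\ge 1$ and $d(c_\alpha,c_{\alpha'})>M$, we have $$(e^M-1)^{1/2}e^{-\lambda d(\alpha)}\le C\,\beta\!\left(\tfrac{c_\alpha}{|c_\alpha|},\tfrac{c_{\alpha'}}{|c_{\alpha'}|}\right).$$
   Context: Notation: $\mathbb{B}_n$ is the open unit ball of $\mathbb{C}^n$, $z\cdot w=\sum_j z_j\overline{w_j}$. For $z\in\mathbb{B}_n$, $\varphi_z$ is the involutive automorphism of $\mathbb{B}_n$ interchanging $0$ and $z$; the Bergman metric is $d(z,w)=\frac12\log\frac{1+|\varphi_z(w)|}{1-|\varphi_z(w)|}$ (so $d(0,z)=\tanh^{-1}|z|$), and $D(z,r)=\{w:d(z,w)<r\}$. The non-isotropic metric on $\partial\mathbb{B}_n$ is $\beta(\zeta,\eta)=|1-\zeta\cdot\eta|^{1/2}$. Bergman tree with parameter $\lambda>0$: for $r>0$ let $S_r=\{z:d(0,z)=r\}$ and for $z\neq0$ let $P_rz$ be the point of $S_r$ on the ray $\{tz:t>0\}$. For each integer $N\ge1$ fix points $z^N_1,\dots,z^N_{J_N}\in S_{\lambda N}$ and a partition of $S_{\lambda N}$ into Borel sets $Q^N_1,\dots,Q^N_{J_N}$ with $B_N(z^N_j,\lambda/2)\subseteq Q^N_j\subseteq B_N(z^N_j,2\lambda)$, where $B_N(z,s)=S_{\lambda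 N}\cap D(z,s)$. Set $K^N_j=\{z:\lambda N\le d(0,z)<\lambda(N+1),\ P_{\lambda N}z\in Q^N_j\}$ with center $c^N_j=P_{\lambda(N+1/2)}z^N_j$; the root is $K_o=\{z:d(0,z)<\lambda\}$ with center $0$. $\mathcal{T}_n$ is the index set consisting of $o$ and all pairs $\alpha=(N,j)$; write $K_\alpha$, $c_\alpha$ and $d(\alpha)=N$ (with $d(o)=0$). The sets $K_\alpha$ partition $\mathbb{B}_n$. Tree structure: $(N+1,i)$ is a child of $(N,j)$ (for $N\ge1$) if $P_{\lambda N}c^{N+1}_i\in Q^N_j$, and every $(1,j)$ is a child of $o$. Write $\beta\ge\alpha$ if $\beta$ equals $\alpha$ or is a descendant of $\alpha$, and $\beta>\alpha$ if moreover $\beta\neq\alpha$; $\mathcal{C}^\ell(\alpha)=\{\beta\ge\alpha:d(\beta)=d(\alpha)+\ell\}$. *)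

From Stdlib Require Vectors.Fin.
From Stdlib Require Import Reals.
Open Scope R_scope.

Definition C := (R * R)%type.
Definition Cadd (z w : C) : C := (fst z + fst w, snd z + snd w).
Definition Csub (z w : C) : C := (fst z - fst w, snd z - snd w).
Definition Cmul (z w : C) : C :=
  (fst z * fst w - snd z * snd w, fst z * snd w + snd z * fst w).
Definition Cmod2 (z : C) : R := fst z * fst z + snd z * snd z.
Definition Cmod (z : C) : R := sqrt (Cmod2 z).
Definition Cinv (z : C) : C := (fst z / Cmod2 z, - snd z / Cmod2 z).
Definition Cdiv (z w : C) : C := Cmul z (Cinv w).
Definition RtoC (r : R) : C := (r, 0).

Definition Cn (n : nat) := Fin.t n -> C.

Fixpoint fsum (n : nat) : (Fin.t n -> C) -> C :=
  match n with
  | O => fun _ => (0, 0)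
  | S m => fun f => Cadd (f Fin.F1) (fsum m (fun i => f (Fin.FS i)))
  end.

Definition conjC (z : C) : C := (fst z, - snd z).
Definition inner {n} (z w : Cn n) : C := fsum n (fun i => Cmul (z i) (conjC (w i))).
Definition vnorm {n} (z : Cn n) : R := sqrt (fst (inner z z)).
Definition vscale {n} (c : C) (z : Cn n) : Cn n := fun i => Cmul c (z i).
Definition vsub {n} (z w : Cn n) : Cn n := fun i => Csub (z i) (w i).

Definition in_ball {n} (z : Cn n) : Prop := vnorm z < 1.

(** The involutive automorphism phi_a of the ball interchanging 0 and a
    (Rudin, Function theory in the unit ball, 2.2.1):
    phi_a(z) = (a - P_a z - s_a Q_a z) / (1 - <z,a>),
    P_a z = (<z,a>/<a,a>) a  (= 0 when a = 0), Q_a = I - P_a, s_a = sqrt(1-|a|^2). *)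
Definition phi {n} (a z : Cn n) : Cn n :=
  let za := inner z a in
  let Pz := vscale (Cdiv za (inner a a)) a in
  let Qz := vsub z Pz in
  let sa := sqrt (1 - vnorm a * vnorm a) in
  fun i => Cdiv (Csub (Csub (a i) (Pz i)) (Cmul (RtoC sa) (Qz i)))
                (Csub (RtoC 1) za).

Definition bdist {n} (z w : Cn n) : R :=
  let t := vnorm (phi z w) in / 2 * ln ((1 + t) / (1 - t)).

Definition origin {n} : Cn n := fun _ => (0, 0).

Definition sphere {n} (r : R) (z : Cn n) : Prop := in_ball z /\ bdist origin z = r.

(** P_r z : the point of S_r on the ray {t z : t > 0}; since d(0,w) = artanh |w|,
    this is (tanh r / |z|) z. *)
Definition Pr {n} (r : R) (z : Cn n) : Cn n := vscale (RtoC (tanh r / vnorm z)) z.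

Definition beta {n} (zeta eta : Cn n) : R := sqrt (Cmod (Csub (RtoC 1) (inner zeta eta))).

Definition normalize {n} (z : Cn n) : Cn n := vscale (RtoC (/ vnorm z)) z.

Definition is_open {n} (U : Cn n -> Prop) : Prop :=
  forall x, U x -> exists eps, 0 < eps /\ forall y, vnorm (vsub y x) < eps -> U y.

Inductive borel {n} : (Cn n -> Prop) -> Prop :=
| borel_open : forall U, is_open U -> borel U
| borel_compl : forall A, borel A -> borel (fun x => ~ A x)
| borel_cunion : forall A : nat -> Cn n -> Prop,
    (forall k, borel (A k)) -> borel (fun x => exists k, A k x)
| borel_ext : forall A B, borel A -> (forall x, A x <-> B x) -> borel B.

Definition Bset {n} (lam : R) (N : nat) (z : Cn n) (s : R) (w : Cn n) : Prop :=
  sphere (lam * INR N) w /\ bdist z w < s.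

(** Data of a Bergman tree with parameter lam: for each level N >= 1, the number
    J N of points, the points z N j (j < J N, 0-based) and the sets Q N j. *)
Definition is_bergman_tree (n : nat) (lam : R) (J : nat -> nat)
  (z : nat -> nat -> Cn n) (Q : nat -> nat -> Cn n -> Prop) : Prop :=
  forall N : nat, (1 <= N)%nat ->
    (forall j, (j < J N)%nat -> sphere (lam * INR N) (z N j)) /\
    (forall j, (j < J N)%nat -> borel (Q N j)) /\
    (forall j, (j < J N)%nat -> forall w, Q N j w -> sphere (lam * INR N) w) /\
    (forall w, sphere (lam * INR N) w -> exists j, (j < J N)%nat /\ Q N j w) /\
    (forall j j' w, (j < J N)%nat -> (j' < J N)%nat -> Q N j w -> Q N j' w -> j = j') /\
    (forall j, (j < J N)%nat -> forall w, Bset lam N (z N j) (lam / 2) w -> Q N j w) /\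
    (forall j, (j < J N)%nat -> forall w, Q N j w -> Bset lam N (z N j) (2 * lam) w).

Definition center {n} (lam : R) (z : nat -> nat -> Cn n) (N j : nat) : Cn n :=
  Pr (lam * (INR N + / 2)) (z N j).

(* The heart of the proof is a pointwise estimate for two points a, w of the
   Euclidean sphere of radius r = tanh R (the Bergman sphere of radius R):
   writing omega = <a/r, w/r>, one has |1 - <w,a>| <= (1 - r^2) + r^2 |1 - omega|,
   while Rudin's identity |1 - <w,a>|^2 (1 - |phi_a(w)|^2) = (1 - r^2)^2 and
   d(a,w) >= m give (1 - r^2) cosh m <= |1 - <w,a>|.  Together, and since
   beta(a/r, w/r)^2 = |1 - omega|, this yields
        cosh m - 1 <= sinh(R)^2 beta(a/r, w/r)^2 <= e^(2R)/4 beta(a/r, w/r)^2.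
   This is applied twice on level N: to the two centres (radius lam(N+1/2),
   distance M), and to the underlying tree points z_j, z_j' (radius lam N), which
   are at distance >= lam/2 because the sets Q_j are disjoint and contain the
   balls B_N(z_j, lam/2).  Both pairs have the same normalized directions, and
   e^M - 1 <= 4 (cosh M - 1) + 1 combines the two bounds. *)

From Pilot Require Import Defs.
From Stdlib Require Import Reals Lra Psatz.
Open Scope R_scope.

Lemma cosh_sq_sub_sinh_sq x : cosh x ^ 2 - sinh x ^ 2 = 1.
Proof.
  unfold cosh, sinh. rewrite exp_Ropp. assert (0 < exp x) by apply exp_pos. field. lra.
Qed.

Lemma cosh_ge_1 x : 1 <= cosh x.
Proof.
  unfold cosh. rewrite exp_Ropp. assert (0 < exp x) by apply exp_pos.
  assert (E : exp x + / exp x - 2 = (exp x - 1) ^ 2 / exp x) by (field; lra).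
  assert (0 <= (exp x - 1) ^ 2 / exp x)
    by (apply Rmult_le_pos; [apply pow2_ge_0|apply Rlt_le, Rinv_0_lt_compat; lra]).
  lra.
Qed.

Lemma cosh_sub_one_pos x : 0 < x -> 0 < cosh x - 1.
Proof.
  intros Hx. unfold cosh. rewrite exp_Ropp.
  assert (Hg : 1 < exp x) by (rewrite <- exp_0; apply exp_increasing; lra).
  assert (E : (exp x + / exp x) / 2 - 1 = (exp x - 1) ^ 2 / (2 * exp x)) by (field; lra).
  rewrite E. apply Rdiv_lt_0_compat; [apply pow_lt|]; lra.
Qed.

Lemma sinh_le_half_exp x : sinh x <= exp x / 2.
Proof. unfold sinh. assert (0 < exp (- x)) by apply exp_pos. lra. Qed.

(* e^x - 1 is controlled by cosh x - 1 = (e^x - 1)^2 / (2 e^x) up to an additive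
   constant: use the quadratic term when e^x >= 2 and the constant otherwise. *)
Lemma exp_sub_one_le_cosh x : exp x - 1 <= 4 * (cosh x - 1) + 1.
Proof.
  unfold cosh. rewrite exp_Ropp. set (g := exp x). assert (0 < g) by apply exp_pos.
  assert (E : 4 * ((g + / g) / 2 - 1) = 2 * (g - 1) ^ 2 / g) by (field; lra).
  rewrite E. destruct (Rle_or_lt 2 g) as [Hg|Hg].
  - assert (E2 : 2 * (g - 1) ^ 2 / g - (g - 1) = (g - 1) * (g - 2) / g) by (field; lra).
    assert (0 <= (g - 1) * (g - 2) / g)
      by (apply Rmult_le_pos; [apply Rmult_le_pos; lra|apply Rlt_le, Rinv_0_lt_compat; lra]).
    lra.
  - assert (0 <= 2 * (g - 1) ^ 2 / g)
      by (apply Rmult_le_pos; [apply Rmult_le_pos; [lra|apply pow2_ge_0]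
                              |apply Rlt_le, Rinv_0_lt_compat; lra]).
    lra.
Qed.

Lemma tanh_exp x : tanh x * (exp x ^ 2 + 1) = exp x ^ 2 - 1.
Proof.
  unfold tanh, sinh, cosh. rewrite exp_Ropp. assert (0 < exp x) by apply exp_pos.
  field. split; [lra|]. assert (0 < exp x * exp x) by nra. intro H1.
  assert (H2 : (exp x + / exp x) * exp x = exp x * exp x + 1) by (field; lra).
  rewrite H1 in H2. lra.
Qed.

Lemma tanh_bounds x : 0 < x -> 0 < tanh x < 1.
Proof.
  intros Hx. assert (H := tanh_exp x).
  assert (1 < exp x) by (rewrite <- exp_0; apply exp_increasing; lra).
  split; nra.
Qed.

Lemma tanh_cosh x : (1 - tanh x ^ 2) * cosh x ^ 2 = 1 /\ tanh x ^ 2 * cosh x ^ 2 = sinh x ^ 2.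
Proof.
  assert (Hc := cosh_ge_1 x). assert (H := cosh_sq_sub_sinh_sq x).
  unfold tanh. split; field_simplify; lra.
Qed.

Lemma sqrt_scaled_le x K y b :
  0 < y -> 0 <= K -> 0 <= b -> x <= K ^ 2 * (y ^ 2 * b ^ 2) -> sqrt x * / y <= K * b.
Proof.
  intros Hy HK Hb Hx.
  assert (Hs : sqrt x <= K * y * b).
  { rewrite <- (sqrt_pow2 (K * y * b)) by (apply Rmult_le_pos; [apply Rmult_le_pos|]; lra).
    apply sqrt_le_1_alt. lra. }
  apply (Rmult_le_compat_r (/ y)) in Hs; [|apply Rlt_le, Rinv_0_lt_compat; lra].
  replace (K * y * b * / y) with (K * b) in Hs by (field; lra). exact Hs.
Qed.

Lemma pair_eq (a b c d : R) : a = c -> b = d -> (a, b) = (c, d).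
Proof. intros -> ->; reflexivity. Qed.

Ltac csolve := repeat match goal with x : Defs.C |- _ => destruct x end;
  unfold Cadd, Csub, Cmul, conjC, RtoC, Cdiv, Cinv, Cmod2 in *; simpl in *;
  apply pair_eq; try ring.

Lemma fsum_ext n (f g : Fin.t n -> Defs.C) :
  (forall i, f i = g i) -> fsum n f = fsum n g.
Proof.
  revert f g; induction n as [|n IH]; intros f g H; simpl; [reflexivity|].
  rewrite H, (IH (fun i => f (Fin.FS i)) (fun i => g (Fin.FS i))); auto.
Qed.

Lemma fsum_add n (f g : Fin.t n -> Defs.C) :
  fsum n (fun i => Cadd (f i) (g i)) = Cadd (fsum n f) (fsum n g).
Proof.
  revert f g; induction n as [|n IH]; intros f g; simpl; [csolve|].
  rewrite IH. generalize (f Fin.F1) (g Fin.F1) (fsum n (fun i => f (Fin.FS i)))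
    (fsum n (fun i => g (Fin.FS i))). intros; csolve.
Qed.

Lemma fsum_scal n c (f : Fin.t n -> Defs.C) :
  fsum n (fun i => Cmul c (f i)) = Cmul c (fsum n f).
Proof.
  revert f; induction n as [|n IH]; intros f; simpl; [csolve|].
  rewrite IH. generalize (f Fin.F1) (fsum n (fun i => f (Fin.FS i))). intros; csolve.
Qed.

Lemma fsum_conj n (f : Fin.t n -> Defs.C) :
  conjC (fsum n f) = fsum n (fun i => conjC (f i)).
Proof.
  revert f; induction n as [|n IH]; intros f; simpl; [csolve|].
  rewrite <- IH. generalize (f Fin.F1) (fsum n (fun i => f (Fin.FS i))). intros; csolve.
Qed.

Lemma fsum_real_nonneg n (f : Fin.t n -> Defs.C) :
  (forall i, 0 <= fst (f i) /\ snd (f i) = 0) ->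
  0 <= fst (fsum n f) /\ snd (fsum n f) = 0.
Proof.
  revert f; induction n as [|n IH]; intros f H; simpl; [lra|].
  destruct (IH (fun i => f (Fin.FS i)) (fun i => H _)), (H Fin.F1). lra.
Qed.

Lemma Cmod2_nonneg (c : Defs.C) : 0 <= Cmod2 c.
Proof. unfold Cmod2. nra. Qed.

(* Triangle inequality in the form used below:
   |1 - p conj(omega)| <= (1 - p) + p |1 - omega| for 0 <= p <= 1. *)
Lemma Cmod2_one_sub_scaled p (om : Defs.C) : 0 <= p <= 1 ->
  Cmod2 (Csub (RtoC 1) (Cmul (RtoC p) (conjC om)))
  <= ((1 - p) + p * Cmod (Csub (RtoC 1) om)) ^ 2.
Proof.
  intros Hp. destruct om as [o1 o2].
  unfold Cmod. set (V2 := Cmod2 (Csub (RtoC 1) (o1, o2))).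
  assert (HV2 : V2 = (1 - o1) ^ 2 + o2 ^ 2) by (unfold V2, Cmod2, Csub, RtoC; simpl; ring).
  assert (HV := pow2_sqrt V2 ltac:(rewrite HV2; apply Rplus_le_le_0_compat; apply pow2_ge_0)).
  assert (HV0 := sqrt_pos V2).
  revert HV HV0. generalize (sqrt V2). intros V HV HV0.
  assert (H1 : 1 - o1 <= V) by nra.
  unfold Cmod2, Csub, Cmul, RtoC, conjC; cbn [fst snd].
  assert (0 <= p * (1 - p) * (V - (1 - o1))) by (apply Rmult_le_pos; nra).
  nra.
Qed.

Lemma inner_ext n (x x' y y' : Cn n) :
  (forall i, x i = x' i) -> (forall i, y i = y' i) -> inner x y = inner x' y'.
Proof. intros Hx Hy; apply fsum_ext; intros; rewrite Hx, Hy; auto. Qed.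

Lemma inner_conj n (x y : Cn n) : inner y x = conjC (inner x y).
Proof. unfold inner. rewrite fsum_conj. apply fsum_ext. intros; csolve. Qed.

Lemma inner_scale n (x y : R) (a b : Cn n) :
  inner (vscale (RtoC x) a) (vscale (RtoC y) b) = Cmul (RtoC (x * y)) (inner a b).
Proof. unfold inner, vscale. rewrite <- fsum_scal. apply fsum_ext. intros; csolve. Qed.

Lemma inner_comb n (X Y : Defs.C) (a w : Cn n) :
  let v := fun i => Cadd (Cmul X (a i)) (Cmul Y (w i)) in
  inner v v
  = Cadd (Cadd (Cmul (Cmul X (conjC X)) (inner a a)) (Cmul (Cmul X (conjC Y)) (inner a w)))
         (Cadd (Cmul (Cmul Y (conjC X)) (inner w a)) (Cmul (Cmul Y (conjC Y)) (inner w w))).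
Proof. unfold inner. rewrite <- !fsum_scal, <- !fsum_add. apply fsum_ext. intros; csolve. Qed.

Lemma inner_self n (x : Cn n) : inner x x = RtoC (vnorm x ^ 2).
Proof.
  assert (H : 0 <= fst (inner x x) /\ snd (inner x x) = 0).
  { apply fsum_real_nonneg. intros i. destruct (x i) as [p q]; simpl. split; [nra|ring]. }
  unfold vnorm, RtoC. rewrite pow2_sqrt by lra.
  destruct (inner x x); simpl in *; destruct H; subst; reflexivity.
Qed.

Lemma vnorm_nonneg n (x : Cn n) : 0 <= vnorm x.
Proof. apply sqrt_pos. Qed.

Lemma vnorm_vscale n (k : R) (x : Cn n) : 0 <= k -> vnorm (vscale (RtoC k) x) = k * vnorm x.
Proof.
  intros Hk. unfold vnorm at 1. rewrite inner_scale, inner_self. unfold Cmul, RtoC; cbn [fst snd].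
  replace (k * k * vnorm x ^ 2 - 0 * 0) with ((k * vnorm x) * (k * vnorm x)) by ring.
  apply sqrt_square. apply Rmult_le_pos; [lra|apply vnorm_nonneg].
Qed.

Lemma inner_origin_l n (u : Cn n) : inner origin u = RtoC 0.
Proof.
  unfold inner. transitivity (fsum n (fun i => Cmul (RtoC 0) (u i))).
  - apply fsum_ext; intros; unfold origin; csolve.
  - rewrite fsum_scal. csolve.
Qed.

Lemma inner_origin_r n (u : Cn n) : inner u origin = RtoC 0.
Proof. rewrite inner_conj, inner_origin_l. csolve. Qed.

Lemma phi_comb n (a w : Cn n) i :
  let p := inner w a in
  let al := Cdiv p (inner a a) in
  let c := Cinv (Csub (RtoC 1) p) in
  let sg := sqrt (1 - vnorm a * vnorm a) in
  phi a w i = Cadd (Cmul (Cmul c (Cadd (Csub (RtoC 1) al) (Cmul (RtoC sg) al))) (a i))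
                   (Cmul (Cmul c (RtoC (- sg))) (w i)).
Proof.
  intros. unfold phi. cbv zeta. fold p al sg.
  unfold vscale, vsub, Cdiv at 1. fold c.
  generalize (a i) (w i) c al sg. intros. csolve.
Qed.

(* Rudin's identity (Function theory in the unit ball, 2.2.2):
   |1 - <w,a>|^2 (1 - |phi_a(w)|^2) = (1 - |a|^2)(1 - |w|^2). *)
Lemma phi_norm_identity n (a w : Cn n) :
  0 < vnorm a < 1 -> Cmod2 (Csub (RtoC 1) (inner w a)) <> 0 ->
  Cmod2 (Csub (RtoC 1) (inner w a)) * (1 - vnorm (phi a w) ^ 2)
  = (1 - vnorm a ^ 2) * (1 - vnorm w ^ 2).
Proof.
  intros Ha Hd. rewrite (inner_conj n a w) in *.
  assert (Hphi : RtoC (vnorm (phi a w) ^ 2) = inner (phi a w) (phi a w))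
    by (symmetry; apply inner_self).
  assert (Hs := pow2_sqrt (1 - vnorm a * vnorm a) ltac:(nra)).
  rewrite (inner_ext _ _ _ _ _ (phi_comb n a w) (phi_comb n a w)), inner_comb,
    (inner_conj n a w), !inner_self in Hphi.
  apply (f_equal fst) in Hphi.
  revert Hs Hphi Hd Ha.
  generalize (sqrt (1 - vnorm a * vnorm a)) as s. generalize (vnorm (phi a w)) as t.
  generalize (vnorm a) as x. generalize (vnorm w) as y.
  intros y x t s Hs Hphi Hd Ha. destruct (inner a w) as [p q].
  unfold Cdiv, Cinv, Cadd, Csub, Cmul, conjC, RtoC, Cmod2 in *; cbn [fst snd] in *.
  replace (x ^ 2 / (x ^ 2 * x ^ 2 + 0 * 0)) with (/ x ^ 2) in Hphi by (field; lra).
  replace (- 0 / (x ^ 2 * x ^ 2 + 0 * 0)) with 0 in Hphi by (field; lra).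
  rewrite Hphi. clear Hphi. field_simplify.
  - replace (s ^ 2) with (1 - x * x) by (symmetry; exact Hs). field.
    intro H. apply Hd, (Rmult_eq_reg_l (x ^ 4)); [|apply pow_nonzero; lra].
    ring_simplify. ring_simplify in H. lra.
  - split; [|lra]. intro H. apply Hd. ring_simplify. ring_simplify in H. lra.
Qed.

(* If <w,a> = 1 the defining quotient degenerates (division by 0) and phi_a(w) = 0. *)
Lemma phi_degenerate n (a w : Cn n) :
  Cmod2 (Csub (RtoC 1) (inner w a)) = 0 -> vnorm (phi a w) = 0.
Proof.
  intros Hd.
  assert (Hz : forall i, phi a w i = origin i).
  { intros i. unfold phi. cbv zeta.
    destruct (inner w a) as [p q]. unfold Cmod2, Csub, RtoC in Hd; cbn [fst snd] in Hd.
    assert (Hp : p = 1) by nra. assert (Hq : q = 0) by nra. subst p q.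
    match goal with |- Cdiv ?c _ = _ => generalize c end. intros [c1 c2].
    unfold origin, Cdiv, Cinv, Csub, Cmul, RtoC, Cmod2; cbn [fst snd]. apply pair_eq;
      unfold Rdiv; rewrite ?Rminus_diag, ?Rmult_0_l, ?Ropp_0, ?Rmult_0_l; ring. }
  unfold vnorm. rewrite (inner_ext _ _ _ _ _ Hz Hz), inner_origin_l. simpl.
  apply sqrt_0.
Qed.

(* phi_0 preserves the norm, so d(0,u) = artanh |u|. *)
Lemma vnorm_phi_origin n (u : Cn n) : vnorm (phi origin u) = vnorm u.
Proof.
  unfold vnorm. f_equal.
  rewrite (inner_ext _ _ _ _ _ (phi_comb n origin u) (phi_comb n origin u)).
  rewrite inner_comb, !inner_origin_l, !inner_origin_r.
  assert (Hv : vnorm (@origin n) = 0).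
  { unfold vnorm. rewrite inner_origin_l. simpl. apply sqrt_0. }
  rewrite Hv. replace (1 - 0 * 0) with 1 by ring. rewrite sqrt_1.
  destruct (inner u u) as [x1 x2].
  unfold Cdiv, Cinv, Cadd, Csub, Cmul, conjC, RtoC, Cmod2; cbn [fst snd].
  generalize (0 / (0 * 0 + 0 * 0)) (- 0 / (0 * 0 + 0 * 0)). intros. field.
Qed.

(* A lower bound m on the Bergman distance artanh t gives t >= tanh m, i.e.
   (1 - t^2) cosh^2 m <= 1. *)
Lemma cosh_bound_of_artanh t m :
  0 <= t < 1 -> 0 <= m -> m <= / 2 * ln ((1 + t) / (1 - t)) ->
  (1 - t ^ 2) * cosh m ^ 2 <= 1.
Proof.
  intros Ht Hm Hd. set (g := exp m).
  assert (Hg : 1 <= g) by (unfold g; rewrite <- exp_0; destruct Hm as [Hm|<-];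
    [left; apply exp_increasing|right]; lra).
  assert (HX : g ^ 2 <= (1 + t) / (1 - t)).
  { destruct (Rle_or_lt (g ^ 2) ((1 + t) / (1 - t))) as [|Hl]; [assumption|exfalso].
    apply ln_increasing in Hl; [|apply Rdiv_lt_0_compat; lra].
    replace (g ^ 2) with (exp (2 * m)) in Hl
      by (unfold g; simpl; rewrite Rmult_1_r, <- exp_plus; f_equal; ring).
    rewrite ln_exp in Hl. lra. }
  assert (Hlow : g ^ 2 - 1 <= t * (g ^ 2 + 1)).
  { apply (Rmult_le_compat_r (1 - t)) in HX; [|lra].
    unfold Rdiv in HX. rewrite Rmult_assoc, Rinv_l, Rmult_1_r in HX; lra. }
  assert (Hsq : (1 - t ^ 2) * (g ^ 2 + 1) ^ 2 <= 4 * g ^ 2).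
  { assert ((g ^ 2 - 1) ^ 2 <= (t * (g ^ 2 + 1)) ^ 2) by (apply pow_incr; nra). nra. }
  assert (Hc : cosh m = (g ^ 2 + 1) / (2 * g)).
  { unfold cosh, g. rewrite exp_Ropp. field. fold g. lra. }
  rewrite Hc. replace ((1 - t ^ 2) * ((g ^ 2 + 1) / (2 * g)) ^ 2)
    with ((1 - t ^ 2) * (g ^ 2 + 1) ^ 2 / (4 * g ^ 2)) by (field; lra).
  apply (Rmult_le_reg_r (4 * g ^ 2)); [nra|].
  unfold Rdiv. rewrite Rmult_assoc, Rinv_l; nra.
Qed.

Lemma sphere_vnorm n R (u : Cn n) : sphere R u -> vnorm u = tanh R.
Proof.
  intros [Hb Hd]. unfold bdist in Hd. cbv zeta in Hd. rewrite vnorm_phi_origin in Hd.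
  unfold in_ball in Hb. assert (H0 := vnorm_nonneg n u).
  revert Hb Hd H0. generalize (vnorm u). intros t Hb Hd H0.
  assert (HX : (1 + t) / (1 - t) = exp R ^ 2).
  { rewrite <- (exp_ln ((1 + t) / (1 - t))) by (apply Rdiv_lt_0_compat; lra). simpl.
    rewrite Rmult_1_r, <- exp_plus. f_equal. lra. }
  assert (Ht : t * (exp R ^ 2 + 1) = exp R ^ 2 - 1).
  { rewrite <- HX. field. lra. }
  assert (HT := tanh_exp R). assert (0 < exp R ^ 2) by (apply pow_lt, exp_pos).
  apply (Rmult_eq_reg_r (exp R ^ 2 + 1)); lra.
Qed.

(* d(a,a) = 0, from Rudin's identity with w = a. *)
Lemma bdist_self n (a : Cn n) : 0 < vnorm a < 1 -> bdist a a = 0.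
Proof.
  intros Ha. assert (Haa := inner_self n a).
  assert (Hd : Cmod2 (Csub (RtoC 1) (inner a a)) = (1 - vnorm a ^ 2) ^ 2).
  { rewrite Haa. unfold Cmod2, Csub, RtoC; cbn [fst snd]. ring. }
  assert (Hpos : 0 < (1 - vnorm a ^ 2) ^ 2) by (apply pow_lt; nra).
  assert (Hid := phi_norm_identity n a a Ha ltac:(lra)).
  rewrite Hd in Hid.
  assert (Ht2 : vnorm (phi a a) ^ 2 = 0) by nra.
  assert (Ht : vnorm (phi a a) = 0) by nra.
  unfold bdist. cbv zeta. rewrite Ht.
  replace ((1 + 0) / (1 - 0)) with 1 by field. rewrite ln_1. ring.
Qed.

Lemma inner_normalize n (a w : Cn n) r :
  0 < r -> vnorm a = r -> vnorm w = r ->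
  inner w a = Cmul (RtoC (r ^ 2)) (conjC (inner (normalize a) (normalize w))).
Proof.
  intros Hr Ha Hw. unfold normalize. rewrite Ha, Hw, inner_scale, (inner_conj n a w).
  destruct (inner w a). csolve; field; lra.
Qed.

Lemma beta_sq n (z w : Cn n) : beta z w ^ 2 = Cmod (Csub (RtoC 1) (inner z w)).
Proof. apply pow2_sqrt, sqrt_pos. Qed.

(* The pointwise estimate on a Euclidean sphere of radius r:
   d(a,w) >= m implies (1 - r^2) cosh m <= (1 - r^2) + r^2 beta(a/r, w/r)^2.
   When <w,a> = 1 the distance is 0 and there is nothing to prove; otherwise
   combine Rudin's identity, the artanh bound and the triangle inequality. *)
Lemma pseudo_hyperbolic_bound n (a w : Cn n) r m :
  0 < r < 1 -> vnorm a = r -> vnorm w = r -> 0 <= m -> m <= bdist a w ->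
  (1 - r ^ 2) * cosh m <= (1 - r ^ 2) + r ^ 2 * beta (normalize a) (normalize w) ^ 2.
Proof.
  intros Hr Ha Hw Hm Hd. rewrite beta_sq.
  assert (Hr2 : 0 < r ^ 2 < 1) by (split; [apply pow_lt|simpl]; nra).
  assert (HD := Cmod2_one_sub_scaled (r ^ 2) (inner (normalize a) (normalize w)) ltac:(nra)).
  rewrite <- (inner_normalize n a w r (proj1 Hr) Ha Hw) in HD.
  set (D := Cmod2 (Csub (RtoC 1) (inner w a))) in *.
  set (V := Cmod (Csub (RtoC 1) (inner (normalize a) (normalize w)))) in *.
  assert (HV : 0 <= V) by apply sqrt_pos.
  assert (Hc := cosh_ge_1 m).
  destruct (Req_dec D 0) as [HD0|HD0].
  - assert (Hb : bdist a w = 0).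
    { unfold bdist. cbv zeta. rewrite (phi_degenerate n a w HD0).
      replace ((1 + 0) / (1 - 0)) with 1 by field. rewrite ln_1. ring. }
    assert (m = 0) by lra. subst m. rewrite cosh_0. nra.
  - assert (Hid := phi_norm_identity n a w ltac:(lra) HD0). fold D in Hid.
    rewrite Ha, Hw in Hid.
    assert (HDpos : 0 < D).
    { assert (0 <= D) by apply Cmod2_nonneg. lra. }
    assert (Ht0 := vnorm_nonneg n (phi a w)).
    assert (Ht1 : vnorm (phi a w) < 1).
    { destruct (Rlt_or_le (vnorm (phi a w)) 1) as [|Hge]; [assumption|exfalso].
      assert (0 < (1 - r ^ 2) * (1 - r ^ 2)) by (apply Rmult_lt_0_compat; lra).
      assert (1 - vnorm (phi a w) ^ 2 <= 0) by nra.
      assert (D * (1 - vnorm (phi a w) ^ 2) <= D * 0) by (apply Rmult_le_compat_l; lra).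
      lra. }
    assert (Hcb := cosh_bound_of_artanh (vnorm (phi a w)) m ltac:(lra) Hm Hd).
    assert (Hsq : ((1 - r ^ 2) * cosh m) ^ 2 <= ((1 - r ^ 2) + r ^ 2 * V) ^ 2).
    { replace (((1 - r ^ 2) * cosh m) ^ 2)
        with (D * (1 - vnorm (phi a w) ^ 2) * cosh m ^ 2) by (rewrite Hid; ring).
      nra. }
    apply Rsqr_incr_0_var; [rewrite !Rsqr_pow2; exact Hsq|].
    assert (0 <= r ^ 2 * V) by (apply Rmult_le_pos; lra). lra.
Qed.

(* The same estimate on the Bergman sphere S_R, multiplied by cosh^2 R. *)
Lemma beta_lower_bound n (a w : Cn n) R m :
  0 < R -> 0 <= m -> vnorm a = tanh R -> vnorm w = tanh R -> m <= bdist a w ->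
  cosh m - 1 <= sinh R ^ 2 * beta (normalize a) (normalize w) ^ 2.
Proof.
  intros HR Hm Ha Hw Hd.
  assert (H := pseudo_hyperbolic_bound n a w (tanh R) m (tanh_bounds R HR) Ha Hw Hm Hd).
  destruct (tanh_cosh R) as [Hc1 Hc2].
  apply (Rmult_le_compat_r (cosh R ^ 2)) in H; [|apply pow2_ge_0].
  set (b := beta (normalize a) (normalize w)) in *.
  replace ((1 - tanh R ^ 2) * cosh m * cosh R ^ 2)
    with (cosh m * ((1 - tanh R ^ 2) * cosh R ^ 2)) in H by ring.
  replace ((1 - tanh R ^ 2 + tanh R ^ 2 * b ^ 2) * cosh R ^ 2)
    with ((1 - tanh R ^ 2) * cosh R ^ 2 + (tanh R ^ 2 * cosh R ^ 2) * b ^ 2) in H by ring.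
  rewrite Hc1, Hc2 in H. lra.
Qed.

Lemma beta_lower_bound_exp n (a w : Cn n) R m :
  0 < R -> 0 <= m -> vnorm a = tanh R -> vnorm w = tanh R -> m <= bdist a w ->
  4 * (cosh m - 1) <= exp R ^ 2 * beta (normalize a) (normalize w) ^ 2.
Proof.
  intros HR Hm Ha Hw Hd.
  assert (H := beta_lower_bound n a w R m HR Hm Ha Hw Hd).
  assert (Hs := sinh_le_half_exp R).
  assert (Hs0 : 0 <= sinh R).
  { unfold sinh. assert (exp (- R) < exp R) by (apply exp_increasing; lra). lra. }
  assert (Hsq : 4 * sinh R ^ 2 <= exp R ^ 2) by nra.
  assert (0 <= beta (normalize a) (normalize w) ^ 2) by apply pow2_ge_0.
  nra.
Qed.

Lemma beta_ext n (z z' w w' : Cn n) :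
  (forall i, z i = z' i) -> (forall i, w i = w' i) -> beta z w = beta z' w'.
Proof. intros Hz Hw. unfold beta. rewrite (inner_ext n z z' w w' Hz Hw). reflexivity. Qed.

Lemma normalize_vscale n k (u : Cn n) :
  0 < k -> 0 < vnorm u -> forall i, normalize (vscale (RtoC k) u) i = normalize u i.
Proof.
  intros Hk Hu i. unfold normalize. rewrite vnorm_vscale by lra.
  unfold vscale. destruct (u i). csolve; field; lra.
Qed.

Lemma vnorm_Pr n R (u : Cn n) : 0 <= tanh R -> 0 < vnorm u -> vnorm (Pr R u) = tanh R.
Proof.
  intros HR Hu. unfold Pr. rewrite vnorm_vscale.
  - field. lra.
  - apply Rmult_le_pos; [lra|apply Rlt_le, Rinv_0_lt_compat; lra].
Qed.

Section BergmanTreeLevel.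

Variables (n : nat) (lam : R) (J : nat -> nat) (z : nat -> nat -> Cn n)
  (Q : nat -> nat -> Cn n -> Prop) (N : nat).
Hypotheses (HT : is_bergman_tree n lam J z Q) (Hlam : 0 < lam) (HN : (1 <= N)%nat).

Let rho := lam * INR N.

Lemma level_radius_pos : 0 < rho.
Proof. apply Rmult_lt_0_compat; [lra|apply lt_0_INR; lia]. Qed.

Lemma level_point_vnorm k : (k < J N)%nat -> vnorm (z N k) = tanh rho.
Proof. intros Hk. apply sphere_vnorm. destruct (HT N HN) as (Hz & _). apply Hz, Hk. Qed.

Lemma level_point_vnorm_pos k : (k < J N)%nat -> 0 < vnorm (z N k).
Proof. intros Hk. rewrite level_point_vnorm by exact Hk. apply tanh_bounds, level_radius_pos. Qed.

Lemma center_radius : lam * (INR N + / 2) = rho + lam / 2.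
Proof. unfold rho. field. Qed.

Lemma level_center_vnorm k :
  (k < J N)%nat -> vnorm (center lam z N k) = tanh (lam * (INR N + / 2)).
Proof.
  intros Hk. apply vnorm_Pr; [|apply level_point_vnorm_pos, Hk].
  apply Rlt_le, tanh_bounds. rewrite center_radius. assert (H := level_radius_pos). lra.
Qed.

(* A centre points in the same direction as its tree point. *)
Lemma level_beta_centers j j' : (j < J N)%nat -> (j' < J N)%nat ->
  beta (normalize (center lam z N j)) (normalize (center lam z N j'))
  = beta (normalize (z N j)) (normalize (z N j')).
Proof.
  intros Hj Hj'.
  assert (Ht : 0 < tanh (lam * (INR N + / 2))).
  { apply tanh_bounds. rewrite center_radius. assert (H := level_radius_pos). lra. }
  apply beta_ext; apply normalize_vscale;
    [apply Rdiv_lt_0_compat; [exact Ht|] | | apply Rdiv_lt_0_compat; [exact Ht|] |];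
    apply level_point_vnorm_pos; assumption.
Qed.

(* Distinct tree points of one level are lam/2 apart: otherwise z_j' lies in
   B_N(z_j, lam/2), a subset of Q_j, as well as in Q_j', and the Q's are disjoint. *)
Lemma level_points_separated j j' : (j < J N)%nat -> (j' < J N)%nat ->
  bdist (z N j) (z N j') < lam / 2 -> j = j'.
Proof.
  intros Hj Hj' Hd. destruct (HT N HN) as (Hz & _ & _ & _ & Huniq & Hball & _).
  assert (Hin : 0 < vnorm (z N j') < 1).
  { rewrite level_point_vnorm by exact Hj'. apply tanh_bounds, level_radius_pos. }
  apply (Huniq j j' (z N j')); auto; apply Hball; auto; split; auto.
  rewrite bdist_self by exact Hin. lra.
Qed.

Lemma level_center_bound j j' M : (j < J N)%nat -> (j' < J N)%nat ->
  0 <= M -> M <= bdist (center lam z N j) (center lam z N j') ->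
  4 * (cosh M - 1)
  <= exp lam
     * (exp rho ^ 2 * beta (normalize (center lam z N j)) (normalize (center lam z N j')) ^ 2).
Proof.
  intros Hj Hj' HM Hd. assert (Hrho := level_radius_pos).
  replace (exp lam * (exp rho ^ 2 * _)) with
    (exp (lam * (INR N + / 2)) ^ 2
     * beta (normalize (center lam z N j)) (normalize (center lam z N j')) ^ 2).
  - apply beta_lower_bound_exp; auto using level_center_vnorm.
    rewrite center_radius. lra.
  - rewrite center_radius. simpl. rewrite !Rmult_1_r, !exp_plus.
    replace (exp lam) with (exp (lam / 2) * exp (lam / 2))
      by (rewrite <- exp_plus; f_equal; field). ring.
Qed.

(* The pointwise estimate for the underlying tree points, which are lam/2 apart
   (j = j' is excluded since distinct centres are at positive distance). *)
Lemma level_point_bound j j' M : (j < J N)%nat -> (j' < J N)%nat ->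
  0 < M -> M < bdist (center lam z N j) (center lam z N j') ->
  4 * (cosh (lam / 2) - 1)
  <= exp rho ^ 2 * beta (normalize (center lam z N j)) (normalize (center lam z N j')) ^ 2.
Proof.
  intros Hj Hj' HM Hd. rewrite level_beta_centers by assumption.
  apply beta_lower_bound_exp; auto using level_radius_pos, level_point_vnorm; [lra|].
  destruct (Rlt_or_le (bdist (z N j) (z N j')) (lam / 2)) as [Hl|]; [exfalso|assumption].
  assert (Hjj := level_points_separated j j' Hj Hj' Hl). subst j'.
  rewrite bdist_self in Hd; [lra|]. rewrite level_center_vnorm by exact Hj.
  apply tanh_bounds. rewrite center_radius. assert (H := level_radius_pos). lra.
Qed.

End BergmanTreeLevel.

(* Main theorem, with K^2 = e^lam + 1 / (4 (cosh(lam/2) - 1)): with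
   Y = e^(2 lam N) beta^2, the centre bound gives 4 (cosh M - 1) <= e^lam Y, the
   point bound gives 4 (cosh(lam/2) - 1) <= Y, and e^M - 1 <= 4 (cosh M - 1) + 1. *)
Theorem lemma2p3 (n : nat) (lam : R) :
  (1 <= n)%nat -> 0 < lam ->
  exists K : R, 0 < K /\
    forall (J : nat -> nat) (z : nat -> nat -> Cn n) (Q : nat -> nat -> Cn n -> Prop),
      is_bergman_tree n lam J z Q ->
      forall (M : R), 0 < M ->
      forall (N j j' : nat), (1 <= N)%nat -> (j < J N)%nat -> (j' < J N)%nat ->
        bdist (center lam z N j) (center lam z N j') > M ->
        sqrt (exp M - 1) * exp (- (lam * INR N))
          <= K * beta (normalize (center lam z N j)) (normalize (center lam z N j')).
Proof.
  intros _ Hlam.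
  set (c := 4 * (cosh (lam / 2) - 1)).
  assert (Hc : 0 < c) by (assert (H := cosh_sub_one_pos (lam / 2)); unfold c; lra).
  assert (Hc' : 0 < / c) by (apply Rinv_0_lt_compat; exact Hc).
  assert (HK2 : 0 < exp lam + / c) by (assert (H := exp_pos lam); lra).
  exists (sqrt (exp lam + / c)). split; [apply sqrt_lt_R0, HK2|].
  intros J z Q HT M HM N j j' HN Hj Hj' Hd.
  set (b := beta (normalize (center lam z N j)) (normalize (center lam z N j'))).
  set (Y := exp (lam * INR N) ^ 2 * b ^ 2).
  assert (Hcenter : 4 * (cosh M - 1) <= exp lam * Y)
    by exact (level_center_bound n lam J z Q N HT Hlam HN j j' M Hj Hj'
                (Rlt_le _ _ HM) (Rlt_le _ _ Hd)).
  assert (Hpoint : c <= Y)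
    by exact (level_point_bound n lam J z Q N HT Hlam HN j j' M Hj Hj' HM Hd).
  assert (HY : 1 <= / c * Y).
  { apply (Rmult_le_reg_l c); [exact Hc|]. rewrite <- Rmult_assoc, Rinv_r; lra. }
  assert (HMc := exp_sub_one_le_cosh M).
  rewrite exp_Ropp. apply sqrt_scaled_le; [apply exp_pos|apply sqrt_pos|apply sqrt_pos|].
  rewrite pow2_sqrt by lra. fold Y. rewrite Rmult_plus_distr_r. lra.
Qed.
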